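(* For all positive integers $r$ and $m$, there exist infinitely many primes $p$ such that $pm$ is a Schemmel nontotient number of order $r$, i.e. $pm\notin S_r(\mathbb{N})$.
   Context: For a positive integer $r$, the $r$-th Schemmel totient function $S_r:\mathbb{N}\to\mathbb{N}_0$ is the multiplicative arithmetic function (so $S_r(1)=1$ and $S_r(ab)=S_r(a)S_r(b)$ for coprime $a,b$) defined on prime powers by $S_r(p^{\alpha})=0$ if $p\le r$ and $S_r(p^\alpha)=p^{\alpha-1}(p-r)$ if $p>r$, for all primes $p$ and positive integers $\alpha$. A Schemmel nontotient number of order $r$ is a positive integer not in the range of $S_r$; $G_r$ denotes the set of these. *)

From mathcomp Require Import all_boot.
Set Implicit Arguments. Unset Strict Implicit. Unset Printing Implicit Defensive.

Definition schemmel (r n : nat) : nat :=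
  \prod_(p <- primes n)
     (if p <= r then 0 else p ^ (logn p n).-1 * (p - r)).

Definition schemmel_nontotient (r m : nat) : Prop :=
  0 < m /\ forall n, 0 < n -> schemmel r n <> m.

From mathcomp Require Import all_boot all_algebra all_field zify.
Set Implicit Arguments. Unset Strict Implicit. Unset Printing Implicit Defensive.

(* Choose a prime p > m + r with (m + r)! dividing p - 1; such primes are
   unbounded because any prime factor q of Phi_n(a), for a divisible by
   (N + n)!, exceeds N + n, so a is a primitive n-th root of unity mod q.
   If S_r(n) = p m, then p divides some factor q^(k-1) (q - r) with q | n
   prime and q > r.  Either p = q and k >= 2, so p (p - r) divides p m,
   impossible as p > m + r; or q = d p + r with d | m, and then q is
   divisible by d + r since d + r divides p - 1, contradicting primality. *)

Section CyclotomicPrimes.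
Import GRing.Theory.
Local Open Scope ring_scope.

Lemma Cyclotomic_dvd_Xn_sub1 n : (0 < n)%N ->
  exists h : {poly int}, 'X^n - 1 = 'Phi_n * h.
Proof.
move=> n_gt0; rewrite -(prod_Cyclotomic n_gt0) (bigD1_seq n) ?divisors_uniq //.
  by eexists.
by rewrite -dvdn_divisors.
Qed.

Lemma Xn_sub1_Cyclotomic_factor n e : (0 < e)%N -> (e %| n)%N -> (e < n)%N ->
  exists h : {poly int}, 'X^n - 1 = 'Phi_n * ('X^e - 1) * h.
Proof.
move=> e_gt0 en lt_en.
have n_gt0 : (0 < n)%N by apply: leq_trans e_gt0 (ltnW lt_en).
rewrite -(prod_Cyclotomic n_gt0) -(prod_Cyclotomic e_gt0).
rewrite (bigID (fun d => d %| e)%N) /=.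
have -> : \prod_(d <- divisors n | (d %| e)%N) 'Phi_d = \prod_(d <- divisors e) 'Phi_d.
  rewrite -big_filter; apply: perm_big; apply: uniq_perm.
  - by rewrite filter_uniq // divisors_uniq.
  - exact: divisors_uniq.
  move=> d; rewrite mem_filter -!dvdn_divisors //.
  by apply/andP/idP => [[]//|de]; split => //; apply: dvdn_trans de en.
set A := \prod_(d <- divisors e) 'Phi_d.
rewrite -big_filter (bigD1_seq n); last by rewrite filter_uniq // divisors_uniq.
  by eexists; rewrite mulrCA mulrA.
rewrite mem_filter -dvdn_divisors // dvdnn andbT.
by apply/negP => /(dvdn_leq e_gt0); rewrite leqNgt lt_en.
Qed.

Lemma map_Xn_sub1 (R : nzRingType) n :
  map_poly (intr : int -> R) ('X^n - 1) = 'X^n - 1.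
Proof. by rewrite rmorphB rmorph1 rmorphXn /= map_polyX. Qed.

Lemma Cyclotomic_root_expn1 (R : comNzRingType) n (x : R) :
  (0 < n)%N -> root (map_poly intr 'Phi_n) x -> x ^+ n = 1.
Proof.
move=> n_gt0 /rootP root_x; have [h eqh] := Cyclotomic_dvd_Xn_sub1 n_gt0.
have := congr1 (fun P => (map_poly (intr : int -> R) P).[x]) eqh.
rewrite /= map_Xn_sub1 rmorphM hornerM root_x mul0r !hornerE.
by move/eqP; rewrite subr_eq0 => /eqP.
Qed.

(* Over a field where [n] is invertible, [X^n - 1] is separable, so a root of
   [Phi_n] cannot also be a root of [X^e - 1] for a proper divisor [e] of [n]. *)
Lemma Cyclotomic_root_prim_root (F : fieldType) n (x : F) :
  (0 < n)%N -> n%:R != 0 :> F -> root (map_poly intr 'Phi_n) x ->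
  n.-primitive_root x.
Proof.
move=> n_gt0 nF0 root_x.
have [e prim_e e_dvd_n] := prim_order_exists n_gt0 (Cyclotomic_root_expn1 n_gt0 root_x).
have [<- //|ne_en] := eqVneq e n.
have e_gt0 := prim_order_gt0 prim_e.
have lt_en : (e < n)%N by rewrite ltn_neqAle ne_en dvdn_leq.
have [h eqh] := Xn_sub1_Cyclotomic_factor e_gt0 e_dvd_n lt_en.
have dvd_phi : ('X - x%:P) %| map_poly intr 'Phi_n by rewrite dvdp_XsubCl.
have dvd_Xe : ('X - x%:P) %| map_poly intr ('X^e - 1).
  by rewrite map_Xn_sub1 dvdp_XsubCl /root !hornerE (prim_expr_order prim_e) subrr.
have := @separable_nosquare _ _ ('X - x%:P) 2 (separable_Xn_sub_1 nF0) isT.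
rewrite size_XsubC => /(_ isT); rewrite -(map_Xn_sub1 F n) eqh !rmorphM expr2.
by rewrite (dvdp_mulr _ (dvdp_mul dvd_phi dvd_Xe)).
Qed.

Lemma prim_root_dvd_card_pred (F : finFieldType) n (z : F) :
  n.-primitive_root z -> (n %| #|F|.-1)%N.
Proof.
move=> prim_z; rewrite (prim_order_dvd prim_z).
have z_neq0 : z != 0 by rewrite (prim_root_eq0 prim_z) -lt0n (prim_order_gt0 prim_z).
have := expf_card z; rewrite -(ltn_predK (finNzRing_gt1 F)) exprS.
by rewrite -[X in _ = X]mulr1 => /(mulfI z_neq0) ->.
Qed.

(* [Phi_n] times [Phi_n - 1] times [Phi_n + 1] is a nonzero polynomial, so it
   cannot vanish at every multiple of [M] below [M * size]. *)
Lemma Cyclotomic_value_gt1 n M : (0 < n)%N -> (0 < M)%N ->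
  exists2 a : nat, (M %| a)%N & (1 < `|('Phi_n).[a%:Z]|)%N.
Proof.
move=> n_gt0 M_gt0.
set P := 'Phi_n * ('Phi_n - 1) * ('Phi_n + 1).
have sz : (1 < size 'Phi_n)%N by rewrite size_Cyclotomic ltnS totient_gt0.
have P_neq0 : P != 0.
  have neq_const c : 'Phi_n != c%:P.
    by apply: contraTneq sz => ->; rewrite ltnNge size_polyC leq_b1.
  rewrite !mulf_neq0 // ?subr_eq0 ?addr_eq0.
  - by have := neq_const 0; rewrite polyC0.
  - by have := neq_const 1; rewrite polyC1.
  - by have := neq_const (-1); rewrite polyCN polyC1.
set rs := [seq (M * i.+1)%N%:Z | i <- iota 0 (size P)].
have rs_uniq : uniq rs.
  rewrite map_inj_uniq ?iota_uniq // => i j /eqP; rewrite eqz_nat.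
  by rewrite eqn_pmul2l // => /eqP [].
have : ~~ all (root P) rs.
  apply/negP => all_root; have := max_poly_roots P_neq0 all_root rs_uniq.
  by rewrite size_map size_iota ltnn.
case/allPn => _ /mapP[i _ ->] notroot; exists (M * i.+1)%N; first exact: dvdn_mulr.
move: notroot; rewrite /root /P !hornerE.
by case: ('Phi_n).[_] => [[|[|k]]|[|k]].
Qed.

Lemma exists_prime_gt_one_mod n N : (0 < n)%N ->
  exists q, (N < q)%N /\ prime q /\ (n %| q.-1)%N.
Proof.
move=> n_gt0.
have [a fact_dvd_a Phi_a_gt1] := Cyclotomic_value_gt1 n_gt0 (fact_gt0 (N + n)).
set q := pdiv `|('Phi_n).[a%:Z]|; have q_prime : prime q := pdiv_prime Phi_a_gt1.
have charFq := pchar_Fp q_prime.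
have root_a : root (map_poly intr 'Phi_n) (a%:R : 'F_q).
  rewrite /root pmulrn horner_map /= -(dvdz_pcharf charFq); exact: pdiv_dvd.
have a_expn := Cyclotomic_root_expn1 n_gt0 root_a.
have lt_q : (N + n < q)%N.
  rewrite ltnNge; apply/negP => le_q; move: a_expn.
  have /eqP -> : (a%:R : 'F_q) == 0.
    rewrite -(dvdn_pcharf charFq); apply: dvdn_trans fact_dvd_a.
    by rewrite dvdn_fact // prime_gt0.
  by rewrite expr0n gtn_eqF // => /esym/eqP; rewrite oner_eq0.
have nF : n%:R != 0 :> 'F_q.
  by rewrite -(dvdn_pcharf charFq); apply: contraTN lt_q => /(dvdn_leq n_gt0); lia.
exists q; split; first by lia.
split => //; rewrite -(card_Fp q_prime).
exact: prim_root_dvd_card_pred (Cyclotomic_root_prim_root n_gt0 nF root_a).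
Qed.

End CyclotomicPrimes.

Definition schemmel_factor r n p :=
  if p <= r then 0 else p ^ (logn p n).-1 * (p - r).

Lemma schemmel_factor_dvd r n q :
  q \in primes n -> schemmel_factor r n q %| schemmel r n.
Proof.
by move=> qn; rewrite /schemmel (bigD1_seq q) ?primes_uniq //= dvdn_mulr.
Qed.

Lemma prime_dvd_schemmel r n p : prime p -> p %| schemmel r n ->
  exists2 q, q \in primes n & p %| schemmel_factor r n q.
Proof.
by move=> p_prime; rewrite /schemmel (Euclid_dvd_prod _ _ _ p_prime) big_has => /hasP.
Qed.

(* [d * p + r = d * (p - 1) + (d + r)] *)
Lemma mul_add_not_prime d r p : 0 < d -> 0 < r -> 1 < p ->
  d + r %| p.-1 -> ~~ prime (d * p + r).
Proof.
move=> d_gt0 r_gt0 p_gt1 /dvdnP[t eq_pred].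
have eq_p : p = t * (d + r) + 1 by rewrite -eq_pred addn1 prednK // ltnW.
have dvd_q : d + r %| d * p + r.
  by apply/dvdnP; exists (d * t + 1); rewrite {1}eq_p; lia.
apply/negP => /primeP[_ /(_ _ dvd_q)] /orP[] /eqP; nia.
Qed.

Lemma schemmel_neq_prime_mul r m p n : 0 < r -> 0 < m -> prime p ->
  m + r < p -> (m + r)`! %| p.-1 -> schemmel r n != p * m.
Proof.
move=> r_gt0 m_gt0 p_prime lt_p fact_dvd; apply/eqP => eqS.
have pm_gt0 : 0 < p * m by rewrite muln_gt0 prime_gt0.
have p_dvd_S : p %| schemmel r n by rewrite eqS dvdn_mulr.
have [q qn p_dvd] := prime_dvd_schemmel p_prime p_dvd_S.
have fq_dvd : schemmel_factor r n q %| p * m by rewrite -eqS schemmel_factor_dvd.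
have q_prime : prime q by move: qn; rewrite mem_primes => /andP[].
have lt_rq : r < q.
  by rewrite ltnNge; apply: contraTN fq_dvd => le_qr; rewrite /schemmel_factor le_qr dvd0n -lt0n.
move: fq_dvd p_dvd; rewrite /schemmel_factor leqNgt lt_rq /= (Euclid_dvdM _ _ p_prime).
move=> fq_dvd /orP[].
  rewrite Euclid_dvdX // dvdn_prime2 // => /andP[/eqP eq_pq logn_gt1]; subst q.
  have : p * (p - r) %| p * m.
    apply: dvdn_trans fq_dvd; apply: dvdn_mul => //.
    by rewrite -(prednK logn_gt1) expnS dvdn_mulr.
  by rewrite dvdn_pmul2l ?prime_gt0 // => /(dvdn_leq m_gt0); lia.
move=> /dvdnP[d eq_qr].
have d_gt0 : 0 < d by move: eq_qr; case: d => //= h; lia.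
have d_dvd_m : d %| m.
  rewrite -(dvdn_pmul2l (prime_gt0 p_prime)); apply: dvdn_trans fq_dvd.
  by rewrite mulnC -eq_qr dvdn_mull.
have dr_dvd : d + r %| p.-1.
  apply: dvdn_trans fact_dvd; apply: dvdn_fact; have := dvdn_leq m_gt0 d_dvd_m; lia.
have eq_q : q = d * p + r by rewrite -eq_qr subnK // ltnW.
have := mul_add_not_prime d_gt0 r_gt0 (prime_gt1 p_prime) dr_dvd.
by rewrite -eq_q q_prime.
Qed.

Theorem theorem1p1 (r m : nat) (hr : 0 < r) (hm : 0 < m) :
  forall N : nat, exists p : nat, N < p /\ prime p /\ schemmel_nontotient r (p * m).
Proof.
move=> N.
have [p [lt_Np [p_prime fact_dvd]]] :=
  exists_prime_gt_one_mod (N + m + r) (fact_gt0 (m + r)).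
exists p; split; first by lia.
split=> //; split; first by rewrite muln_gt0 prime_gt0.
move=> n _; apply/eqP; apply: schemmel_neq_prime_mul => //; lia.
Qed.
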